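(* Let $(f_k)_{k\in\mathbb Z}$ be the probability mass function of a sum of $m$ independent Bernoulli variables with parameters $p_1,\ldots,p_m$, and for each $j$ let $(f^{(j)}_k)_{k\in\mathbb Z}$ be the mass function of the sum omitting the $j$-th variable (all extended by $0$ outside their supports). Then for every $k\in\mathbb Z$ and every integer $q\ge1$, $$qf_kf_{k-q}=\sum_{j=1}^mp_j(1-p_j)\left[f^{(j)}_{k-1}f^{(j)}_{k-q}-f^{(j)}_kf^{(j)}_{k-q-1}\right].$$ *)

From HB Require Import structures.
From mathcomp Require Import all_boot all_order all_algebra.
Set Implicit Arguments. Unset Strict Implicit. Unset Printing Implicit Defensive.
Import Order.TTheory GRing.Theory Num.Theory.
Local Open Scope ring_scope.

(* Probability mass function, at k : int, of the sum of the independent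
   Bernoulli variables X_i ~ Bernoulli(p i) for i ranging over the index set A:
   P(sum_{i in A} X_i = k) = sum over subsets S of A with |S| = k of
   prod_{i in S} p i * prod_{i in A \ S} (1 - p i).
   It is 0 for k < 0 or k > #|A| automatically (empty sum). *)
Definition pb_pmf (R : nzRingType) (m : nat) (A : {set 'I_m}) (p : 'I_m -> R)
  (k : int) : R :=
  \sum_(S in powerset A | (#|S|%:Z == k)%R)
     (\prod_(i in S) p i) * (\prod_(i in A :\: S) (1 - p i)).

From HB Require Import structures.
From mathcomp Require Import all_boot all_order all_algebra ring.
Import Order.TTheory GRing.Theory Num.Theory.
Local Open Scope ring_scope.

(* The identity is a purely algebraic fact about the Poisson-binomial mass
   function f_A(k) = P(sum_{i in A} X_i = k), valid over any commutative ring
   and for all integers k, l: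

     (k - l) f_A(k) f_A(l)
       = sum_{j in A} p_j (1 - p_j) [f_{A\j}(k-1) f_{A\j}(l) - f_{A\j}(k) f_{A\j}(l-1)].

   The only structural input is the one-step recursion obtained by
   conditioning on a fixed variable X_i:
     f_A(k) = p_i f_{A\i}(k-1) + (1 - p_i) f_{A\i}(k),
   proved by splitting the subsets S of A according to whether i is in S.
   The identity is then proved by induction on #|A|: expanding both sides
   with this recursion at a fixed i in A, each summand j <> i becomes an
   instance of the induction hypothesis for A \ i, and what remains is a ring
   identity.  The theorem is the case A = [set: 'I_m], l = k - q. *)

Section PoissonBinomial.

Variables (R : comNzRingType) (m : nat) (p : 'I_m -> R).

Implicit Types (A S T : {set 'I_m}) (i j : 'I_m) (k l : int).

Notation f A := (pb_pmf A p).

Lemma pb_pmf_set0 k : f set0 k = (k == 0)%:R.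
Proof.
rewrite /pb_pmf powerset0 big_mkcondr big_set1 cards0 setD0 !big_set0 mulr1.
by rewrite eq_sym; case: eqP.
Qed.

(* Outcomes in which X_i = 1: the subsets S of A containing i are exactly the
   sets i |: T with T a subset of A \ i, and #|S| = #|T| + 1. *)
Lemma pb_pmf_with i A k : i \in A ->
  \sum_(S in powerset A | (#|S|%:Z == k) && (i \in S))
     (\prod_(x in S) p x) * (\prod_(x in A :\: S) (1 - p x))
  = p i * f (A :\ i) (k - 1).
Proof.
move=> iA; rewrite /pb_pmf mulr_sumr.
rewrite (reindex_onto (fun T => i |: T) (fun S => S :\ i)) /=; last first.
  by move=> S /and3P[_ _ iS]; rewrite setD1K.
apply: eq_big => [T|T /andP[_ /eqP iT]].
  rewrite setU11 andbT; have [iT|iT] := boolP (i \in T).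
    have -> : ((i |: T) :\ i == T) = false.
      by apply/negbTE/eqP => TiT; move: iT; rewrite -TiT setD11.
    by rewrite andbF powersetE subsetD1 iT andbF.
  rewrite setU1K // eqxx andbT !powersetE subsetD1 iT andbT subUset sub1set iA.
  rewrite cardsU1 iT /= add1n; congr (_ && _).
  by rewrite [RHS]eq_sym subr_eq eq_sym -addn1 PoszD.
have iT' : i \notin T by rewrite -iT setD11.
by rewrite big_setU1 //= -setDDl mulrA.
Qed.

(* Outcomes in which X_i = 0: the subsets of A avoiding i are the subsets of
   A \ i, and the complement A \ S gains the extra factor 1 - p i. *)
Lemma pb_pmf_without i A k : i \in A ->
  \sum_(S in powerset A | (#|S|%:Z == k) && (i \notin S))
     (\prod_(x in S) p x) * (\prod_(x in A :\: S) (1 - p x))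
  = (1 - p i) * f (A :\ i) k.
Proof.
move=> iA; rewrite /pb_pmf mulr_sumr.
apply: eq_big => [S|S /and3P[_ _ iS]].
  by rewrite !powersetE subsetD1 andbAC andbA.
have -> : A :\: S = i |: (A :\ i :\: S).
  apply/setP => x; rewrite !inE; case: (eqVneq x i) => [->|] //=.
  by rewrite iA (negbTE iS).
rewrite big_setU1 /=; last by rewrite !inE eqxx andbF.
by rewrite mulrCA.
Qed.

Lemma pb_pmf_rec i A k : i \in A ->
  f A k = p i * f (A :\ i) (k - 1) + (1 - p i) * f (A :\ i) k.
Proof.
move=> iA; rewrite -pb_pmf_with // -pb_pmf_without //.
rewrite {1}/pb_pmf (bigID (fun S => i \in S)) /=.
by congr (_ + _); apply: eq_bigl => S; rewrite andbA.
Qed.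

Definition pb_cross A k l : R :=
  \sum_(j in A) p j * (1 - p j) *
     (f (A :\ j) (k - 1) * f (A :\ j) l - f (A :\ j) k * f (A :\ j) (l - 1)).

Lemma pb_cross_set0 k l : pb_cross set0 k l = 0.
Proof. by rewrite /pb_cross big_set0. Qed.

Lemma setD1C i j A : A :\ j :\ i = A :\ i :\ j.
Proof. by rewrite !setDDl setUC. Qed.

(* Recursion for the cross sum: split off the term j = i, and in every other
   term condition on X_i (which is still present in A \ j).  Each of the four
   outcomes of X_i in the two factors gives a cross sum over A \ i. *)
Lemma pb_cross_rec i A k l : i \in A ->
  let g := f (A :\ i) in
  pb_cross A k l =
    p i * (1 - p i) * (g (k - 1) * g l - g k * g (l - 1))
    + (p i * p i * pb_cross (A :\ i) (k - 1) (l - 1)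
       + p i * (1 - p i) * pb_cross (A :\ i) (k - 1) l
       + p i * (1 - p i) * pb_cross (A :\ i) k (l - 1)
       + (1 - p i) * (1 - p i) * pb_cross (A :\ i) k l).
Proof.
move=> iA g; rewrite /pb_cross (big_setD1 i iA) /=; congr (_ + _).
rewrite !mulr_sumr -!big_split /=; apply: eq_bigr => j.
rewrite !inE => /andP[ji jA].
have iAj : i \in A :\ j by rewrite !inE eq_sym ji.
rewrite !(pb_pmf_rec i (A :\ j) _ iAj) setD1C; ring.
Qed.

Lemma pb_cross_eq A k l : pb_cross A k l = (k - l)%:~R * f A k * f A l.
Proof.
move cardA : #|A| => n; elim: n A cardA k l => [|n IH] A cardA k l.
  rewrite (cards0_eq cardA) pb_cross_set0 !pb_pmf_set0.
  by case: (eqVneq k 0) => [->|]; case: (eqVneq l 0) => [->|];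
    rewrite ?subrr /= ?mulr0 ?mul0r ?mulr1.
have [i iA] : exists i, i \in A by apply/set0Pn; rewrite -card_gt0 cardA.
have cardAi : #|A :\ i| = n by move: cardA; rewrite (cardsD1 i A) iA add1n => -[].
rewrite (pb_cross_rec i A k l iA) /= !IH //.
rewrite (pb_pmf_rec i A k iA) (pb_pmf_rec i A l iA) !intrB; ring.
Qed.

End PoissonBinomial.

Theorem lemmaA1 (R : realFieldType) (m : nat) (p : 'I_m -> R)
  (hp : forall j, 0 <= p j <= 1) (k : int) (q : nat) (hq : (1 <= q)%N) :
  let f := pb_pmf [set: 'I_m] p in
  let fj := fun j : 'I_m => pb_pmf ([set: 'I_m] :\ j) p in
  q%:R * f k * f (k - q%:Z) =
  \sum_(j < m) p j * (1 - p j) *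
     (fj j (k - 1) * fj j (k - q%:Z) - fj j k * fj j (k - q%:Z - 1)).
Proof.
move=> f fj.
have -> : q%:R = (k - (k - q%:Z))%:~R :> R by rewrite opprB addrC subrK.
rewrite -pb_cross_eq /pb_cross.
by apply: eq_bigl => j; rewrite in_setT.
Qed.
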